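(* Let $X$ be a Hausdorff topological space, $T:X\to X$ continuous, $V\subseteq X$ a nonempty open set and $\delta>0$ such that for every nonempty open set $U\subseteq V$ there is $x_U\in U$ with $\overline{Bd}(N_T(x_U,U))>\delta$. Then there is $j\ge1$ such that $T^j|_V=\mathrm{Id}_V$.
   Context: $N_T(x,U)=\{n\in\mathbb N:T^nx\in U\}$. The upper Banach density of $A\subseteq\mathbb N$ is $\overline{Bd}(A)=\lim_n\sup_k\#(A\cap[k,k+n])/n$. *)

From HB Require Import structures.
From mathcomp Require Import all_boot all_order all_algebra.
From mathcomp Require Import all_classical all_reals all_analysis.
Set Implicit Arguments. Unset Strict Implicit. Unset Printing Implicit Defensive.
Import Order.TTheory GRing.Theory Num.Theory.
Import numFieldNormedType.Exports.
Local Open Scope classical_set_scope.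
Local Open Scope ring_scope.

Definition return_times {X : Type} (T : X -> X) (x : X) (U : set X) : set nat :=
  [set n | U (iter n T x)].

Definition count_window (A : set nat) (k n : nat) : nat :=
  (\sum_(k <= i < (k + n).+1) (asbool (A i) : nat))%N.

Definition banach_window {R : realType} (A : set nat) (n : nat) : R :=
  sup [set ((count_window A k n)%:R / n%:R : R) | k in [set: nat]].

Definition upper_banach_density {R : realType} (A : set nat) : R :=
  limn (@banach_window R A).

From HB Require Import structures.
From mathcomp Require Import all_boot all_order all_algebra.
From mathcomp Require Import all_classical all_reals all_analysis.
From mathcomp Require Import zify.

Set Implicit Arguments.
Unset Strict Implicit.
Unset Printing Implicit Defensive.

Import Order.TTheory GRing.Theory Num.Theory.
Import numFieldNormedType.Exports.
Local Open Scope classical_set_scope.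
Local Open Scope ring_scope.

(* Choose K with 2/K < delta and suppose some x in V is not fixed by T^(K!).
   Since every 0 < d < K divides K!, no T^d with 0 < d < K fixes x, so by
   Hausdorffness and continuity x has a neighbourhood U that no point re-enters
   in fewer than K steps. The return times of any point to U then have gaps of
   length at least K, hence upper Banach density at most 2/K < delta,
   contradicting the hypothesis applied to U (shrunk into V). *)

Definition no_early_return (X : Type) (K : nat) (T : X -> X) (U : set X) :=
  forall y d, (0 < d < K)%N -> U y -> ~ U (iter d T y).

Lemma no_early_return_sub (X : Type) (K : nat) (T : X -> X) (U W : set X) :
  W `<=` U -> no_early_return K T U -> no_early_return K T W.
Proof. by move=> WU hU y d hd /WU Uy /WU; exact: hU. Qed.

Lemma count_windowS_split (A : set nat) k a b :
  count_window A k (a + b).+1 = (count_window A k a + count_window A (k + a).+1 b)%N.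
Proof.
rewrite /count_window -big_cat_nat; [|lia|lia].
by rewrite addnS addSn addnA.
Qed.

(* For [succn], [no_early_return K succn A] says that distinct elements of [A]
   are at least [K] apart. *)
Section SeparatedSets.
Variables (A : set nat) (K : nat).
Hypothesis K_gt0 : (0 < K)%N.
Hypothesis A_separated : no_early_return K succn A.

Lemma count_window_short_le1 k n : (n < K)%N -> (count_window A k n <= 1)%N.
Proof.
elim: n => [|n IHn] hn; first by rewrite /count_window addn0 big_nat1; case: asboolP.
rewrite /count_window addnS big_nat_recr /=; last by lia.
have := IHn (ltnW hn); rewrite /count_window.
case: (asboolP (A (k + n).+1)) => Akn; last by rewrite addn0.
rewrite big_nat_cond big1 // => i /andP [/andP [ki ikn] _].
case: asboolP => // Ai; exfalso.
have hd : (0 < (k + n).+1 - i < K)%N by lia.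
have := A_separated hd Ai; rewrite iter_succn subnKC; [by apply|lia].
Qed.

Lemma count_window_le k n : (K * count_window A k n <= n + K)%N.
Proof.
elim/ltn_ind: n k => n IHn k.
case: (ltnP n K) => [nK | Kn].
  by have := count_window_short_le1 k nK; nia.
have -> : n = ((K - 1) + (n - K)).+1%N by lia.
rewrite count_windowS_split.
have := @count_window_short_le1 k (K - 1) ltac:(lia).
have := IHn (n - K)%N ltac:(lia) (k + (K - 1)).+1.
nia.
Qed.

Lemma banach_window_le (R : realType) n : (K <= n)%N -> @banach_window R A n <= 2 / K%:R.
Proof.
move=> Kn; apply: ge_sup; first by exists ((count_window A 0 n)%:R / n%:R), 0%N.
move=> _ [k _ <-].
rewrite ler_pdivrMr ?ltr0n ?(leq_trans K_gt0) // mulrAC ler_pdivlMr ?ltr0n //.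
rewrite -!natrM ler_nat.
by have := count_window_le k n; nia.
Qed.

Lemma upper_banach_density_le (R : realType) : @upper_banach_density R A <= 2 / K%:R.
Proof.
rewrite /upper_banach_density.
have [cvg_bw | ncvg_bw] := pselect (cvgn (@banach_window R A)).
  by apply: limr_le => //; exists K => // n /= Kn; exact: banach_window_le.
(* Without convergence, [limn] is the junk value [0]. *)
rewrite /lim /lim_in xgetPN; first by rewrite divr_ge0 ?ler0n.
by move=> l /cvgP.
Qed.

End SeparatedSets.

Lemma iter_fixed_dvdn (X : Type) (T : X -> X) x d n :
  iter d T x = x -> (d %| n)%N -> iter n T x = x.
Proof. by move=> Tdx /dvdnP [q ->]; rewrite iterM; elim: q => //= q ->. Qed.

Lemma continuous_iter (X : topologicalType) (T : X -> X) n :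
  continuous T -> continuous (iter n T).
Proof.
move=> cT; elim: n => [|n IHn] x /=; first exact: cvg_id.
exact: (continuous_comp (IHn x) (cT _)).
Qed.

Lemma nbhs_disjoint_image (X : topologicalType) (f : X -> X) x :
  hausdorff_space X -> {for x, continuous f} -> f x != x ->
  exists2 U, nbhs x U & forall y, U y -> ~ U (f y).
Proof.
rewrite open_hausdorff => hX cf fxx.
have [[A B] /= [Afx Bx] [oA oB /eqP AB0]] := hX _ _ fxx.
rewrite !inE in Afx Bx.
exists (B `&` f @^-1` A).
  by apply: filterI; [|apply: cf]; apply: open_nbhs_nbhs; split.
move=> y [_ Afy] [Bfy _].
by rewrite -[False]/(set0 (f y)) -AB0.
Qed.

Lemma nbhs_no_early_return (X : topologicalType) (T : X -> X) (K : nat) x :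
  hausdorff_space X -> continuous T ->
  (forall d, (0 < d < K)%N -> iter d T x != x) ->
  exists2 U, nbhs x U & no_early_return K T U.
Proof.
move=> hX cT aperiodic.
have Ud (d : 'I_K) : exists U : set X, (0 < d)%N -> nbhs x U /\
    forall y, U y -> ~ U (iter d T y).
  have [d0|d_gt0] := posnP d; first by exists setT; rewrite d0.
  have [U Ux hU] := nbhs_disjoint_image hX (@continuous_iter _ _ d cT x)
    (aperiodic d ltac:(by rewrite d_gt0 ltn_ord)).
  by exists U.
have [U hU] := choice Ud.
exists [set y | forall d : 'I_K, (0 < d)%N -> U d y].
  apply: filter_forall => d; have [d0|d_gt0] := posnP d.
    exact: nearW.
  by apply: filterS (hU d d_gt0).1 => y Uy _.
move=> y d /andP [d_gt0 dK] Uy UTy.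
exact: (hU (Ordinal dK) d_gt0).2 y (Uy (Ordinal dK) d_gt0) (UTy (Ordinal dK) d_gt0).
Qed.

Lemma no_early_return_times (X : Type) (K : nat) (T : X -> X) (U : set X) z :
  no_early_return K T U -> no_early_return K succn (return_times T z U).
Proof.
by move=> hU n d hd Un; rewrite /return_times /= iter_succn addnC iterD; exact: hU.
Qed.

Lemma exists_nat_div_lt (R : archiFieldType) (c e : R) :
  0 <= c -> 0 < e -> exists2 K : nat, (0 < K)%N & c / K%:R < e.
Proof.
move=> c_ge0 e_gt0; exists (Num.bound (c / e)).+1 => //.
rewrite ltr_pdivrMr ?ltr0n // mulrC -ltr_pdivrMr //.
apply: lt_le_trans (archi_boundP (divr_ge0 c_ge0 (ltW e_gt0))) _.
by rewrite ler_nat.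
Qed.

Theorem mainTheorem13 (R : realType) (X : topologicalType) (T : X -> X)
  (V : set X) (delta : R) :
  hausdorff_space X -> continuous T -> open V -> V !=set0 -> 0 < delta ->
  (forall U : set X, open U -> U !=set0 -> U `<=` V ->
     exists2 xU, U xU & delta < upper_banach_density (return_times T xU U)) ->
  exists2 j : nat, (1 <= j)%N & forall x, V x -> iter j T x = x.
Proof.
move=> hX cT oV _ delta_gt0 recurrent.
have [K K_gt0 K_small] := exists_nat_div_lt (ler0n R 2) delta_gt0.
exists K`!; first exact: fact_gt0.
move=> x Vx; apply: contrapT => x_moved.
have aperiodic d : (0 < d < K)%N -> iter d T x != x.
  move=> /andP [d_gt0 dK]; apply/eqP => Tdx; apply: x_moved.
  by apply: iter_fixed_dvdn Tdx _; rewrite dvdn_fact // d_gt0 ltnW.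
have [U Ux U_no_return] := nbhs_no_early_return hX cT aperiodic.
move: Ux; rewrite nbhsE => -[B [oB Bx] BU].
have [|||z _ dense_returns] := recurrent (B `&` V).
- exact: openI.
- by exists x.
- by move=> y [].
have BV_no_return : no_early_return K T (B `&` V).
  by apply: no_early_return_sub U_no_return => y [/BU].
have := upper_banach_density_le K_gt0 (no_early_return_times (z := z) BV_no_return) R.
by rewrite leNgt (lt_trans K_small dense_returns).
Qed.
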